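(* Let $n,m,p,N\in\mathbb{N}_+$, $B\in\mathbb{R}^{n\times m}$, $C\in\mathbb{R}^{p\times n}$ of full column rank, $x_0\in\mathbb{R}^n$, $r_1,\dots,r_N\in\mathbb{R}^p$, $r_0:=Cx_0$, $\lambda_1,\lambda_2,\lambda_3\ge0$, functions $f_1,f_2,f_3$, and let $\omega^{\rm c}>0$ and $\mathcal{S}\subseteq\{(A,U,\omega)\in\mathbb{R}^{n\times n}\times\mathbb{R}^{m\times N}\times\mathbb{R}_+:\omega=\omega^{\rm c}\}$. Problem (MOPUL) is: minimize $\lambda_1f_1(A)+\lambda_2f_2(U)+\lambda_3f_3(\omega)$ over $(A,U,\omega)$, $U=(u_0,\dots,u_{N-1})$, subject to $x_t=Ax_{t-1}+Bu_{t-1}$ ($t=1,\dots,N$), $y_t=Cx_t$ ($t=0,\dots,N$), $\sum_{t=1}^N\|y_t-r_t\|_2\le\omega$, $(A,U,\omega)\in\mathcal{S}$. Let $\beta>0$ and consider the modified approximation problem (AMOPUL$_\beta$): minimize the same objective over $(A,U,\omega)$ subject to $\sum_{t=1}^N\|CAC^{\dagger}r_{t-1}+CBu_{t-1}-r_t\|_2\le\omega^{\rm c}/\big(\sum_{i=0}^{N-1}\beta^i\big)$ and $(A,U,\omega)\in\mathcal{S}$. If $\|CA^{\rm a}C^{\dagger}\|_2\le\beta$ for every feasible $A^{\rm a}$ of (AMOPUL$_\beta$), then every feasible solution $(A^{\rm a},U^{\rm a})$ (with $\omega=\omega^{\rm c}$) of (AMOPUL$_\beta$) is feasible for (MOPUL),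 and the optimal objective value of (AMOPUL$_\beta$) is an upper bound for the optimal objective value of (MOPUL).
   Context: $C^{\dagger}$ is the Moore–Penrose inverse of $C$; $\|\cdot\|_2$ is the Euclidean norm for vectors and the spectral norm for matrices. In the paper $f_1,f_2,f_3$ and $\mathcal{S}$ are assumed SD representable, though this is not used in the claim. *)

From mathcomp Require Import all_boot all_order all_algebra.
From mathcomp Require Import all_classical all_reals ereal.
Set Implicit Arguments. Unset Strict Implicit. Unset Printing Implicit Defensive.
Import Order.TTheory GRing.Theory Num.Theory.
Local Open Scope ring_scope.
Local Open Scope classical_set_scope.

Definition enorm (R : realType) (k : nat) (v : 'cV[R]_k) : R :=
  Num.sqrt (\sum_(i < k) v i 0 ^+ 2).

Definition specnorm (R : realType) (p q : nat) (M : 'M[R]_(p, q)) : R :=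
  sup [set enorm (M *m x) | x in [set x : 'cV[R]_q | enorm x <= 1]].

Definition is_MP_inverse (R : realType) (p n : nat)
    (C : 'M[R]_(p, n)) (Cd : 'M[R]_(n, p)) : Prop :=
  [/\ C *m Cd *m C = C, Cd *m C *m Cd = Cd,
      (C *m Cd)^T = C *m Cd & (Cd *m C)^T = Cd *m C].

(* column u_t of U = (u_0, ..., u_{N-1}); 0 outside the range (never used) *)
Definition ucol (R : realType) (m N : nat) (U : 'M[R]_(m, N)) (t : nat) : 'cV[R]_m :=
  match @insub _ (fun t => t < N)%N 'I_N t with Some j => col j U | None => 0 end.

Fixpoint traj (R : realType) (n m N : nat) (A : 'M[R]_n) (B : 'M[R]_(n, m))
    (U : 'M[R]_(m, N)) (x0 : 'cV[R]_n) (t : nat) : 'cV[R]_n :=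
  match t with
  | 0 => x0
  | t'.+1 => A *m traj A B U x0 t' + B *m ucol U t'
  end.

Definition dec (R : realType) (n m N : nat) := ('M[R]_n * 'M[R]_(m, N) * R)%type.

Definition MOPUL_feas (R : realType) (n m p N : nat) (B : 'M[R]_(n, m))
    (C : 'M[R]_(p, n)) (x0 : 'cV[R]_n) (r : nat -> 'cV[R]_p)
    (S : set (dec R n m N)) : set (dec R n m N) :=
  fun z => let: (A, U, om) := z in
    \sum_(1 <= t < N.+1) enorm (C *m traj A B U x0 t - r t) <= om /\ S z.

Definition AMOPUL_feas (R : realType) (n m p N : nat) (B : 'M[R]_(n, m))
    (C : 'M[R]_(p, n)) (Cd : 'M[R]_(n, p)) (r : nat -> 'cV[R]_p)
    (omc beta : R) (S : set (dec R n m N)) : set (dec R n m N) :=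
  fun z => let: (A, U, om) := z in
    \sum_(1 <= t < N.+1)
        enorm (C *m A *m Cd *m r t.-1 + C *m B *m ucol U t.-1 - r t)
      <= omc / (\sum_(i < N) beta ^+ i) /\ S z.

Definition objective (R : realType) (n m N : nat) (l1 l2 l3 : R)
    (f1 : 'M[R]_n -> R) (f2 : 'M[R]_(m, N) -> R) (f3 : R -> R)
    (z : dec R n m N) : R :=
  let: (A, U, om) := z in l1 * f1 A + l2 * f2 U + l3 * f3 om.

(* optimal value (infimum in the extended reals; +oo if infeasible) *)
Definition optval (R : realType) (T : Type) (obj : T -> R) (F : set T) : \bar R :=
  ereal_inf [set (obj z)%:E | z in F].

From mathcomp Require Import all_boot all_order all_algebra.
From mathcomp Require Import all_classical all_reals ereal.
From mathcomp Require Import ring lra.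
Set Implicit Arguments. Unset Strict Implicit. Unset Printing Implicit Defensive.
Import Order.TTheory GRing.Theory Num.Theory.
Local Open Scope ring_scope.
Local Open Scope classical_set_scope.

(* With M := C A C^dagger and C^dagger C = 1, the output error of the true trajectory satisfies
   C x_t - r_t = M (C x_{t-1} - r_{t-1}) + (M r_{t-1} + C B u_{t-1} - r_t),
   so e_t <= ||M|| e_{t-1} + d_t with e_0 = 0, where d_t are the residuals bounded in (AMOPUL_beta).
   Unrolling with ||M|| <= beta gives sum_t e_t <= (sum_{i<N} beta^i) sum_t d_t <= omega^c, i.e.
   feasibility for (MOPUL); the optimal values then compare because the feasible set of
   (AMOPUL_beta) is contained in that of (MOPUL). *)

Lemma CauchySchwarz_sum (R : rcfType) (I : finType) (a b : I -> R) :
  \sum_i a i * b i <= Num.sqrt (\sum_i a i ^+ 2) * Num.sqrt (\sum_i b i ^+ 2).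
Proof.
set A := \sum_i a i ^+ 2; set B := \sum_i b i ^+ 2; set S := \sum_i a i * b i.
have A_ge0 : 0 <= A by apply: sumr_ge0 => i _; apply: sqr_ge0.
have [A0|A_neq0] := eqVneq A 0.
  have a0 i : a i = 0.
    by apply/eqP; rewrite -sqrf_eq0; apply/eqP/(psumr_eq0P _ A0) => // j _; apply: sqr_ge0.
  by rewrite /S big1 ?mulr_ge0 ?sqrtr_ge0 // => i _; rewrite a0 mul0r.
have A_gt0 : 0 < A by rewrite lt0r A_neq0.
have expand (x y : R) :
    \sum_i (x * b i - y * a i) ^+ 2 = x ^+ 2 * B - 2 * x * y * S + y ^+ 2 * A.
  by rewrite /A /B /S !mulr_sumr -sumrN -!big_split; apply: eq_bigr => i _ /=; ring.
have SS_le : S ^+ 2 <= A * B.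
  have : 0 <= \sum_i (A * b i - S * a i) ^+ 2 by apply: sumr_ge0 => i _; apply: sqr_ge0.
  by rewrite expand; nra.
have B_ge0 : 0 <= B by apply: sumr_ge0 => i _; apply: sqr_ge0.
rewrite -sqrtrM //; apply: le_trans (ler_norm S) _.
by rewrite -sqrtr_sqr ler_sqrt ?mulr_ge0.
Qed.

Section EuclideanNorm.
Context {R : realType}.
Implicit Types (k : nat).

Lemma enorm_ge0 k (v : 'cV[R]_k) : 0 <= enorm v.
Proof. exact: sqrtr_ge0. Qed.

Lemma enorm_eq0 k (v : 'cV[R]_k) : (enorm v == 0) = (v == 0).
Proof.
apply/idP/eqP => [|->]; last first.
  by rewrite /enorm big1 ?sqrtr0 // => i _; rewrite mxE expr0n.
rewrite sqrtr_eq0 => le0; have sum0 : \sum_i v i 0 ^+ 2 = 0.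
  by apply/eqP; rewrite eq_le le0 sumr_ge0 // => i _; apply: sqr_ge0.
apply/matrixP => i j; rewrite ord1 mxE; apply/eqP; rewrite -sqrf_eq0.
by apply/eqP/(psumr_eq0P _ sum0) => // l _; apply: sqr_ge0.
Qed.

Lemma enorm0 k : enorm (0 : 'cV[R]_k) = 0.
Proof. by apply/eqP; rewrite enorm_eq0. Qed.

Lemma enormZ k (c : R) (v : 'cV[R]_k) : enorm (c *: v) = `|c| * enorm v.
Proof.
rewrite /enorm -sqrtr_sqr -sqrtrM ?sqr_ge0 // mulr_sumr.
by congr Num.sqrt; apply: eq_bigr => i _; rewrite mxE exprMn.
Qed.

Lemma enormD k (u v : 'cV[R]_k) : enorm (u + v) <= enorm u + enorm v.
Proof.
have uv_ge0 : 0 <= enorm u + enorm v by rewrite addr_ge0 ?enorm_ge0.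
rewrite -(ger0_norm uv_ge0) -sqrtr_sqr ler_sqrt ?sqr_ge0 //.
have cs := CauchySchwarz_sum (fun i => u i 0) (fun i => v i 0).
have sqr_enorm (w : 'cV[R]_k) : enorm w ^+ 2 = \sum_i w i 0 ^+ 2.
  by rewrite sqr_sqrtr // sumr_ge0 // => i _; apply: sqr_ge0.
have -> : \sum_i (u + v) i 0 ^+ 2 =
    enorm u ^+ 2 + 2 * (\sum_i u i 0 * v i 0) + enorm v ^+ 2.
  rewrite !sqr_enorm mulr_sumr -!big_split; apply: eq_bigr => i _ /=.
  by rewrite mxE; ring.
rewrite -/(enorm u) -/(enorm v) in cs; nra.
Qed.

Lemma enorm_sum k (I : Type) (s : seq I) (P : pred I) (F : I -> 'cV[R]_k) :
  enorm (\sum_(i <- s | P i) F i) <= \sum_(i <- s | P i) enorm (F i).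
Proof.
apply: (big_ind2 (fun w x => enorm w <= x)) => //; first by rewrite enorm0.
by move=> w x w' x' le_wx le_w'x'; apply: le_trans (enormD _ _) (lerD _ _).
Qed.

Lemma norm_coord_le_enorm k (v : 'cV[R]_k) i : `|v i 0| <= enorm v.
Proof.
rewrite -sqrtr_sqr ler_sqrt ?sumr_ge0 // => [|j _]; last exact: sqr_ge0.
by rewrite (bigD1 i) //= lerDl sumr_ge0 // => j _; apply: sqr_ge0.
Qed.

Lemma enorm_mulmx_le p q (M : 'M[R]_(p, q)) (v : 'cV[R]_q) :
  enorm (M *m v) <= \sum_j `|v j 0| * enorm (col j M).
Proof.
have -> : M *m v = \sum_j v j 0 *: col j M.
  apply/matrixP => i l; rewrite ord1 !mxE summxE.
  by apply: eq_bigr => j _; rewrite !mxE mulrC.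
by apply: le_trans (enorm_sum _ _ _) _; apply: ler_sum => j _; rewrite enormZ.
Qed.

End EuclideanNorm.

Section SpectralNorm.
Context {R : realType} {p q : nat}.
Implicit Types (M : 'M[R]_(p, q)) (v : 'cV[R]_q).

Lemma specnorm_has_sup M :
  has_sup [set enorm (M *m v) | v in [set v : 'cV[R]_q | enorm v <= 1]].
Proof.
split; first by exists (enorm (M *m 0)), 0 => //=; rewrite enorm0 ler01.
exists (\sum_j enorm (col j M)) => _ [v /= v_le1 <-].
apply: le_trans (enorm_mulmx_le _ _) _; apply: ler_sum => j _.
by rewrite ler_piMl ?enorm_ge0 // (le_trans (norm_coord_le_enorm _ _)).
Qed.

Lemma enorm_mulmx_specnorm M v : enorm (M *m v) <= specnorm M * enorm v.
Proof.
have [v0|v_neq0] := eqVneq v 0; first by rewrite v0 mulmx0 !enorm0 mulr0.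
have v_gt0 : 0 < enorm v by rewrite lt0r enorm_eq0 v_neq0 enorm_ge0.
have unit_v : enorm ((enorm v)^-1 *: v) <= 1.
  by rewrite enormZ gtr0_norm ?invr_gt0 // mulVf ?gt_eqF.
have := sup_upper_bound (specnorm_has_sup M)
  (ex_intro2 _ _ ((enorm v)^-1 *: v) unit_v erefl).
rewrite -scalemxAr enormZ gtr0_norm ?invr_gt0 // -/(specnorm M).
by rewrite mulrC ler_pdivrMr.
Qed.

End SpectralNorm.

Lemma ginverse_full_col_rank_mulmx (F : fieldType) (p n : nat)
    (C : 'M[F]_(p, n)) (Cd : 'M[F]_(n, p)) :
  \rank C = n -> C *m Cd *m C = C -> Cd *m C = 1%:M.
Proof.
move=> rankC CCdC; have freeCt : row_free C^T by rewrite /row_free mxrank_tr rankC.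
apply: trmx_inj; apply: (row_free_inj freeCt).
by rewrite /= -trmx_mul mulmxA CCdC trmx1 mul1mx.
Qed.

Section GeometricSum.
Context {R : realDomainType}.
Variable beta : R.
Hypothesis beta_ge0 : 0 <= beta.

Lemma geom_sum_ge0 k : 0 <= \sum_(i < k) beta ^+ i.
Proof. by apply: sumr_ge0 => i _; apply: exprn_ge0. Qed.

Lemma geom_sumS k : \sum_(i < k.+1) beta ^+ i = 1 + beta * \sum_(i < k) beta ^+ i.
Proof.
rewrite big_ord_recl expr0 mulr_sumr; congr (_ + _).
by apply: eq_bigr => i _; rewrite exprS.
Qed.

Lemma le_geom_sum j k : (j <= k)%N -> \sum_(i < j) beta ^+ i <= \sum_(i < k) beta ^+ i.
Proof.
move=> le_jk; rewrite (big_ord_widen k (fun i => beta ^+ i) le_jk) big_mkcond /=.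
by apply: ler_sum => i _; case: ifP => // _; apply: exprn_ge0.
Qed.

Lemma sum_le_geom_sum_mul (e d : nat -> R) N :
  e 0%N = 0 -> (forall t, 0 <= d t) -> (forall t, e t.+1 <= beta * e t + d t.+1) ->
  \sum_(1 <= t < N.+1) e t <= (\sum_(i < N) beta ^+ i) * \sum_(1 <= t < N.+1) d t.
Proof.
move=> e0 d_ge0 e_rec; set G := fun k => \sum_(i < k) beta ^+ i.
(* [beta * G (N - T) * e T] bounds the contribution of [e T] to the errors after time [T]. *)
suff inv T : (T <= N)%N -> \sum_(1 <= t < T.+1) e t + beta * G (N - T)%N * e T
    <= G N * \sum_(1 <= t < T.+1) d t.
  by have := inv N (leqnn N); rewrite subnn /G big_ord0 mulr0 mul0r addr0.
elim: T => [_|T IH lt_TN]; first by rewrite !big_geq // e0 !mulr0 add0r.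
have {IH} := IH (ltnW lt_TN); rewrite !(big_nat_recr _ _ _ (ltn0Sn T)) /=.
have G_TN : G (N - T)%N <= G N by apply: le_geom_sum; rewrite leq_subr.
have GS : G (N - T)%N = 1 + beta * G (N - T.+1)%N by rewrite /G -geom_sumS subnSK.
have le_e := ler_wpM2l (geom_sum_ge0 (N - T)) (e_rec T).
have le_d := ler_wpM2r (d_ge0 T.+1) G_TN.
rewrite -/(G _) GS in le_e le_d *; nra.
Qed.

End GeometricSum.

Section Tracking.
Context {R : realType} {n m p N : nat}.
Variables (B : 'M[R]_(n, m)) (C : 'M[R]_(p, n)) (Cd : 'M[R]_(n, p)).
Variables (x0 : 'cV[R]_n) (r : nat -> 'cV[R]_p).
Hypothesis CdC : Cd *m C = 1%:M.

Lemma output_error_step (A : 'M[R]_n) (x : 'cV[R]_n) (u : 'cV[R]_m) (r1 r2 : 'cV[R]_p) :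
  enorm (C *m (A *m x + B *m u) - r2) <=
    specnorm (C *m A *m Cd) * enorm (C *m x - r1)
    + enorm (C *m A *m Cd *m r1 + C *m B *m u - r2).
Proof.
set M := C *m A *m Cd.
have -> : C *m (A *m x + B *m u) - r2 =
    M *m (C *m x - r1) + (M *m r1 + C *m B *m u - r2).
  rewrite mulmxBr !mulmxA -(mulmxA _ Cd) CdC mulmx1 mulmxDr !mulmxA.
  by rewrite !addrA subrK.
by apply: le_trans (enormD _ _) _; rewrite lerD2r enorm_mulmx_specnorm.
Qed.

Hypothesis r0 : r 0%N = C *m x0.

Lemma tracking_error_le (beta : R) (A : 'M[R]_n) (U : 'M[R]_(m, N)) :
  0 <= beta -> specnorm (C *m A *m Cd) <= beta ->
  \sum_(1 <= t < N.+1) enorm (C *m traj A B U x0 t - r t) <=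
    (\sum_(i < N) beta ^+ i) *
    \sum_(1 <= t < N.+1) enorm (C *m A *m Cd *m r t.-1 + C *m B *m ucol U t.-1 - r t).
Proof.
move=> beta_ge0 le_beta; apply: sum_le_geom_sum_mul => // [|t|t].
- by rewrite /= r0 subrr enorm0.
- exact: enorm_ge0.
apply: le_trans (output_error_step _ _ _ (r t) _) _.
by rewrite lerD2r ler_wpM2r ?enorm_ge0.
Qed.

Lemma AMOPUL_feas_sub_MOPUL_feas (omc beta : R) (S : set (dec R n m N)) :
  (0 < N)%N -> 0 < beta -> S `<=` [set z | z.2 = omc] ->
  (forall z, AMOPUL_feas B C Cd r omc beta S z -> specnorm (C *m z.1.1 *m Cd) <= beta) ->
  AMOPUL_feas B C Cd r omc beta S `<=` MOPUL_feas B C x0 r S.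
Proof.
move=> N_gt0 beta_gt0 S_omc spec_le [[A U] om] feas; have le_beta := spec_le _ feas.
case: feas => /= le_sum Sz; split => //; rewrite [om](S_omc _ Sz).
have G_gt0 : 0 < \sum_(i < N) beta ^+ i.
  apply: lt_le_trans (le_geom_sum (ltW beta_gt0) N_gt0).
  by rewrite big_ord1 expr0 ltr01.
apply: le_trans (tracking_error_le U (ltW beta_gt0) le_beta) _.
by rewrite mulrC -ler_pdivlMr.
Qed.

End Tracking.

Lemma optval_le_subset (R : realType) (T : Type) (obj : T -> R) (F G : set T) :
  F `<=` G -> (optval obj G <= optval obj F)%E.
Proof. by move=> FG; apply: ereal_inf_le_tmp; apply: image_subset. Qed.

Unset Implicit Arguments.
Theorem theorem3 (R : realType) (n m p N : nat)
  (B : 'M[R]_(n, m)) (C : 'M[R]_(p, n)) (Cd : 'M[R]_(n, p))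
  (x0 : 'cV[R]_n) (r : nat -> 'cV[R]_p)
  (l1 l2 l3 : R) (f1 : 'M[R]_n -> R) (f2 : 'M[R]_(m, N) -> R) (f3 : R -> R)
  (omc beta : R) (S : set (dec R n m N)) :
  (0 < n)%N -> (0 < m)%N -> (0 < p)%N -> (0 < N)%N ->
  \rank C = n ->
  is_MP_inverse C Cd ->
  r 0%N = C *m x0 ->
  0 <= l1 -> 0 <= l2 -> 0 <= l3 ->
  0 < omc ->
  S `<=` [set z | z.2 = omc /\ 0 < z.2] ->
  0 < beta ->
  (forall z, AMOPUL_feas B C Cd r omc beta S z -> specnorm (C *m z.1.1 *m Cd) <= beta) ->
  (forall z, AMOPUL_feas B C Cd r omc beta S z -> MOPUL_feas B C x0 r S z) /\
  (optval (objective l1 l2 l3 f1 f2 f3) (MOPUL_feas B C x0 r S)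
     <= optval (objective l1 l2 l3 f1 f2 f3) (AMOPUL_feas B C Cd r omc beta S))%E.
Proof.
move=> _ _ _ N_gt0 rankC [CCdC _ _ _] r0 _ _ _ _ S_omc beta_gt0 spec_le.
have CdC := ginverse_full_col_rank_mulmx rankC CCdC.
have feas := AMOPUL_feas_sub_MOPUL_feas CdC r0 N_gt0 beta_gt0
  (fun z Sz => (S_omc z Sz).1) spec_le.
by split=> //; apply: optval_le_subset.
Qed.
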